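(* Let $k \geq 2$ be an integer, let $G$ be a $(k+1)$-connected $(K_2 \cup kK_1)$-free graph, let $a,b \in V(G)$ be distinct, and let $P$ be a longest $ab$-path in $G$. Then every component of $G - V(P)$ consists of a single vertex.
   Context: All graphs are finite, undirected and simple. For graphs $R, R'$, $R \cup R'$ is their disjoint union and $kR$ is the disjoint union of $k$ copies of $R$; $K_n$ is the complete graph on $n$ vertices. A graph $G$ is $R$-free if it contains no induced subgraph isomorphic to $R$. *)

From mathcomp Require Import all_boot.
Set Implicit Arguments. Unset Strict Implicit. Unset Printing Implicit Defensive.

Definition simple_graph (T : finType) (e : rel T) : Prop :=
  symmetric e /\ irreflexive e.

Definition induced_rel (T : finType) (e : rel T) (A : {pred T}) : rel T :=
  fun u v => [&& e u v, u \in A & v \in A].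

Definition connected_minus (T : finType) (e : rel T) (S : {set T}) : Prop :=
  forall x y : T, x \notin S -> y \notin S ->
    connect (induced_rel e [pred v | v \notin S]) x y.

Definition kconnected (n : nat) (T : finType) (e : rel T) : Prop :=
  n < #|T| /\ forall S : {set T}, #|S| < n -> connected_minus e S.

Definition has_induced (U T : finType) (eR : rel U) (e : rel T) : Prop :=
  exists f : U -> T, injective f /\ forall x y : U, eR x y = e (f x) (f y).

Definition free_of (U T : finType) (eR : rel U) (e : rel T) : Prop :=
  ~ has_induced eR e.

Definition K2_kK1 (k : nat) : rel 'I_(k.+2) :=
  fun i j => ((val i == 0) && (val j == 1)) || ((val i == 1) && (val j == 0)).

(* an ab-path: the vertex sequence a :: p, consecutive vertices adjacent,
   all vertices distinct, ending at b *)
Definition is_path (T : finType) (e : rel T) (a b : T) (p : seq T) : Prop :=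
  [/\ path e a p, uniq (a :: p) & last a p = b].

Definition longest_path (T : finType) (e : rel T) (a b : T) (p : seq T) : Prop :=
  is_path e a b p /\ forall q, is_path e a b q -> size q <= size p.
Arguments K2_kK1 k : clear implicits.

(* Let H be the component of x in G - V(P) and suppose it has an edge xz.  Its
   neighbourhood N lies on P, and any two vertices of N are joined through H by
   a path avoiding P.  For u in N other than b let u+ be its successor on P.
   Rerouting P through H shows that u+ is not in N (insert the detour between u
   and u+) and that u+ v+ is not an edge when u precedes v (run a..u, H, v
   back to u+, then v+..b); either would give a longer ab-path.  As a or a+
   lies outside N, N separates x from a vertex of P, so |N| >= k+1 by
   connectivity, and k of the successors together with xz induce K_2 + kK_1. *)

From mathcomp Require Import all_boot.
Set Implicit Arguments. Unset Strict Implicit.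

Lemma connect_neq_edge (T : finType) (r : rel T) x y :
  connect r x y -> x != y -> exists z, r x z.
Proof.
case/connectP=> [[|z q]] /=; first by move=> _ ->; rewrite eqxx.
by case/andP=> rxz _ _ _; exists z.
Qed.

Lemma path_induced_all (T : finType) (e : rel T) (A : {pred T}) x q :
  path (induced_rel e A) x q -> all [in A] q.
Proof.
elim: q x => [|y q IHq] x //= /andP[/and3P[_ _ yA] hq].
by rewrite yA (IHq y hq).
Qed.

Lemma path_rev_sym (T : eqType) (e : rel T) (esym : symmetric e) x y q :
  path e x (rev (y :: q)) = path e y (rcons q x).
Proof.
rewrite -[x in LHS](last_rcons y q) -[y :: q](belast_rcons y q x) rev_path.
by apply: eq_path => u v; rewrite esym.
Qed.

Lemma has_induced_K2_kK1 k (T : finType) (e : rel T) x z (t : seq T) :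
  symmetric e -> irreflexive e -> e x z -> uniq (x :: z :: t) ->
  {in t, forall v, e x v = false} -> {in t, forall v, e z v = false} ->
  {in t &, forall u v, u != v -> e u v = false} ->
  k <= size t -> has_induced (K2_kK1 k) e.
Proof.
move=> esym eirr exz uxzt ext ezt et kt; rewrite -(size_takel kt).
have sub : {subset take k t <= t} by move=> v /mem_take.
move: (sub_in1 sub ext) (sub_in1 sub ezt) (sub_in2 sub et).
have : uniq (x :: z :: take k t) := take_uniq k.+2 uxzt.
move: (take k t) => {ext ezt et sub kt uxzt}t uxzt ext ezt et.
exists (fun i : 'I_(size t).+2 => nth x (x :: z :: t) i); split.
  by move=> i j /eqP; rewrite nth_uniq //= => /eqP/val_inj.
have tP i : i < size t -> nth x t i \in t := @mem_nth _ x t i.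
case=> [[|[|i]] hi] [[|[|j]] hj]; rewrite /K2_kK1 /=.
- by rewrite eirr.
- by rewrite exz.
- by rewrite ext ?tP.
- by rewrite esym exz.
- by rewrite eirr.
- by rewrite ezt ?tP.
- by rewrite esym ext ?tP.
- by rewrite esym ezt ?tP.
have [<-|nij] := eqVneq i j; first by rewrite eirr.
by rewrite et ?tP // nth_uniq //; case/and3P: uxzt.
Qed.

Definition component (T : finType) (e : rel T) (s : seq T) (x : T) : {set T} :=
  [set y | connect (induced_rel e [pred v | v \notin s]) x y].

Definition nbhd (T : finType) (e : rel T) (A : {set T}) : {set T} :=
  [set y | (y \notin A) && [exists h in A, e h y]].

(* [q] lists the inner vertices of a u-v path all of whose inner vertices
   avoid [s]. *)
Definition detour (T : finType) (e : rel T) (s : seq T) (u v : T) (q : seq T) :=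
  [/\ q != [::], path e u (rcons q v), uniq q & all [predC s] q].

Lemma mem_nbhd (T : finType) (e : rel T) (A : {set T}) h y :
  h \in A -> e h y -> y \notin A -> y \in nbhd e A.
Proof. by move=> hA ehy yA; rewrite inE yA; apply/existsP; exists h; rewrite hA. Qed.

Lemma notin_nbhd_nonadj (T : finType) (e : rel T) (A : {set T}) h y :
  h \in A -> y \notin A -> y \notin nbhd e A -> e h y = false.
Proof. by move=> hA yA; apply: contraNF => ehy; apply: mem_nbhd ehy yA. Qed.

Lemma kconnected_card_nbhd n (T : finType) (e : rel T) (A : {set T}) x w :
  symmetric e -> kconnected n e -> x \in A -> w \notin A -> w \notin nbhd e A ->
  n <= #|nbhd e A|.
Proof.
move=> esym [_ hconn] xA wA wN; rewrite leqNgt; apply/negP => /hconn hNA.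
have xN : x \notin nbhd e A by rewrite inE xA.
have closedA : closed (induced_rel e [pred v | v \notin nbhd e A]) A.
  move=> u v /and3P[euv uN vN]; rewrite inE in uN; rewrite inE in vN.
  apply/idP/idP => [uA|vA]; first exact: contraNT (mem_nbhd uA euv) vN.
  by apply: contraNT uN; apply: mem_nbhd vA _; rewrite esym.
by move: (closed_connect closedA (hNA x w xN wN)); rewrite [LHS]xA (negbTE wA).
Qed.

Section Component.
Variables (T : finType) (e : rel T) (s : seq T) (x : T).
Hypothesis esym : symmetric e.
Hypothesis xs : x \notin s.
Local Notation H := (component e s x).

Lemma component_self : x \in H.
Proof. by rewrite inE connect0. Qed.

Lemma component_notin y : y \in H -> y \notin s.
Proof.
rewrite inE => /connectP[q /path_induced_all qs ->].
have /allP : all [in [pred v | v \notin s]] (x :: q) by rewrite /= qs inE xs.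
by apply; rewrite mem_last.
Qed.

Lemma mem_notin_component y : y \in s -> y \notin H.
Proof. exact: contraL (@component_notin y). Qed.

Lemma component_adj u y : u \in H -> e u y -> y \notin s -> y \in H.
Proof.
move=> uH euy ys; move: (uH); rewrite !inE => xu.
apply: connect_trans xu (connect1 _).
by rewrite /induced_rel euy !inE (component_notin uH) ys.
Qed.

Lemma nbhd_component_sub y : y \in nbhd e H -> y \in s.
Proof.
rewrite inE => /andP[yH /existsP[u /andP[uH euy]]].
exact: contraNT (component_adj uH euy) yH.
Qed.

Lemma nbhd_component_detour u v :
  u \in nbhd e H -> v \in nbhd e H -> exists q, detour e s u v q.
Proof.
rewrite !inE => /andP[_ /existsP[h /andP[hH ehu]]] /andP[_ /existsP[h' /andP[hH' eh'v]]].
pose R := induced_rel e [pred v | v \notin s].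
have Rsym : symmetric R by move=> y z; rewrite /R /induced_rel esym (andbC (y \in _)).
have : connect R h h'.
  by move: hH hH'; rewrite !inE -/R (sym_connect_sym Rsym x); apply: connect_trans.
case/connectP=> r /shortenP[r' hr' ur' _] lastr; rewrite {}lastr in eh'v.
exists (h :: r'); split => //.
- rewrite /= rcons_path esym ehu eh'v andbT.
  by apply: sub_path hr' => y z /and3P[].
- by rewrite /= (component_notin hH) (path_induced_all hr').
Qed.

End Component.

Section SeqSplit.
Variables (T : eqType) (a : T) (p : seq T).

Lemma index_lt_size_path u : u \in a :: p -> u != last a p -> index u (a :: p) < size p.
Proof.
move=> up ub; move: (up); rewrite -index_mem /= ltnS leq_eqVlt => /orP[/eqP idx|//].
by move: ub; rewrite (last_nth a) -idx nth_index ?eqxx.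
Qed.

Lemma next_nth_path u : u \in a :: p -> next (a :: p) u = nth a p (index u (a :: p)).
Proof. by rewrite next_nth => ->. Qed.

Lemma last_take_nth i : i <= size p -> last a (take i p) = nth a (a :: p) i.
Proof.
by move=> ip; rewrite (last_nth a) size_takel // -[a :: _]/(take i.+1 (a :: p)) nth_take.
Qed.

Lemma cat_take_nth_drop i : i < size p -> take i p ++ nth a p i :: drop i.+1 p = p.
Proof. by move=> ip; rewrite -drop_nth ?cat_take_drop. Qed.

Lemma cat_take_nth_mid i j : i < j -> j < size p -> exists M,
  take i p ++ nth a p i :: M ++ nth a p j :: drop j.+1 p = p /\
  last (nth a p i) M = nth a (a :: p) j.
Proof.
move=> ij jp; have ijp : i < size (take j p) by rewrite size_takel // ltnW.
have Ej := cat_take_nth_drop jp; have := cat_take_drop i (take j p).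
rewrite (drop_nth a ijp) take_takel ?nth_take ?(ltnW ij) // => Ei.
exists (drop i.+1 (take j p)); split; first by rewrite -[in RHS]Ej -[in RHS]Ei -catA.
by rewrite -last_take_nth ?(ltnW jp) // -[in RHS]Ei last_cat.
Qed.

End SeqSplit.

Section LongestPath.
Variables (T : finType) (e : rel T) (a b : T) (p : seq T).
Hypothesis esym : symmetric e.
Hypothesis hlong : longest_path e a b p.
Local Notation s := (a :: p).

Lemma longest_path_no_extension q r :
  path e a q -> last a q = b -> perm_eq q (p ++ r) ->
  r != [::] -> uniq r -> all [predC s] r -> False.
Proof.
case: hlong => [[_ us _] maxp] aq lq pq r0 ur rs.
have : size q <= size p.
  apply: maxp; split=> //; rewrite (perm_uniq (_ : perm_eq _ (s ++ r))) ?perm_cons //.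
  by rewrite cat_uniq us ur -all_predC rs.
by rewrite (perm_size pq) size_cat -[X in _ <= X]addn0 leq_add2l leqn0 size_eq0 (negbTE r0).
Qed.

Lemma no_detour_between P1 y P3 q :
  P1 ++ y :: P3 = p -> ~ detour e s (last a P1) y q.
Proof.
move=> Ep [q0 pq uq qs]; have [[ap _ lp] _] := hlong.
move: ap lp; rewrite -Ep cat_path /= => /andP[aP1 /andP[_ yP3]] lp.
apply: (@longest_path_no_extension (P1 ++ q ++ y :: P3) q) => //.
- by rewrite cat_path aP1 -cat_rcons cat_path pq last_rcons.
- by rewrite -lp !last_cat.
- by rewrite -Ep perm_catCA perm_sym perm_catC.
Qed.

Lemma no_crossing_detour P1 y M y' P3 q :
  P1 ++ y :: M ++ y' :: P3 = p -> detour e s (last a P1) (last y M) q ->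
  e y y' = false.
Proof.
move=> Ep [q0 pq uq qs]; apply/negP => eyy'; have [[ap _ lp] _] := hlong.
move: ap lp; rewrite -Ep cat_path /= cat_path /=.
case/andP=> aP1 /andP[_ /andP[yM /andP[_ y'P3]]] lp.
move: pq; rewrite rcons_path => /andP[pq eqM].
apply: (@longest_path_no_extension (P1 ++ q ++ rev (y :: M) ++ y' :: P3) q) => //.
- rewrite !cat_path aP1 pq path_rev_sym // rcons_path yM esym eqM.
  by rewrite rev_cons last_rcons /= eyy'.
- by rewrite -lp !last_cat /= last_cat.
- rewrite -Ep perm_catCA perm_sym perm_catC !perm_cat2l -cat_cons perm_cat2r.
  by rewrite perm_sym perm_rev.
Qed.

Variable x : T.
Hypothesis xs : x \notin s.
Local Notation H := (component e s x).
Local Notation N := (nbhd e H).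

(* [next s u] is the successor of [u] on P for [u != b]. *)

Lemma longest_path_last : last a p = b.
Proof. by case: hlong => -[]. Qed.

Lemma next_nbhd_notin u : u \in N -> u != b -> next s u \notin N.
Proof.
move=> uN ub; apply/negP => nN.
have us := nbhd_component_sub xs uN.
have [q dq] := nbhd_component_detour esym xs uN nN.
have ip : index u s < size p by rewrite index_lt_size_path ?longest_path_last.
apply: (no_detour_between (cat_take_nth_drop a ip) (q := q)).
by rewrite last_take_nth ?nth_index ?(ltnW ip) // -next_nth_path.
Qed.

Lemma next_nbhd_nonadj u v :
  u \in N -> v \in N -> u != b -> v != b -> u != v -> e (next s u) (next s v) = false.
Proof.
wlog uv : u v / index u s < index v s => [hyp uN vN ub vb|uN vN ub vb _].
  have us := nbhd_component_sub xs uN; have vs := nbhd_component_sub xs vN.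
  case: (ltngtP (index u s) (index v s)) => [uv|vu|/(index_inj a us vs)->].
  - exact: hyp.
  - by rewrite eq_sym esym; apply: hyp.
  - by rewrite eqxx.
have us := nbhd_component_sub xs uN; have vs := nbhd_component_sub xs vN.
have vp : index v s < size p by rewrite index_lt_size_path ?longest_path_last.
have [M [Ep lM]] := cat_take_nth_mid a uv vp.
have [q dq] := nbhd_component_detour esym xs uN vN.
rewrite !next_nth_path //; apply: (no_crossing_detour Ep (q := q)).
by rewrite lM last_take_nth ?nth_index ?(ltnW (ltn_trans uv vp)).
Qed.

Lemma exists_path_notin_nbhd : a != b -> exists2 w, w \in s & w \notin N.
Proof.
move=> ab; have [aN|aN] := boolP (a \in N); last by exists a; rewrite ?mem_head.
by exists (next s a); [rewrite mem_next mem_head | apply: next_nbhd_notin].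
Qed.

Lemma component_edge_induced_K2_kK1 k z :
  irreflexive e -> induced_rel e [pred v | v \notin s] x z -> k < #|N| ->
  has_induced (K2_kK1 k) e.
Proof.
move=> eirr xz kN; have /and3P[exz _ zs] := xz.
have xH : x \in H by apply: component_self.
have zH : z \in H by rewrite inE connect1.
pose t := map (next s) (enum (N :\ b)).
have tP v : v \in t -> v \in s /\ v \notin N.
  case/mapP=> u; rewrite mem_enum in_setD1 => /andP[ub uN] ->.
  by rewrite mem_next (nbhd_component_sub xs uN) next_nbhd_notin.
have tH v (vt : v \in t) : v \notin H := mem_notin_component e xs (tP v vt).1.
have [[_ us _] _] := hlong.
apply: (has_induced_K2_kK1 (t := t) esym eirr exz).
- rewrite /= inE negb_or (contra (fun h => (tP x h).1) xs).
  rewrite (contra (fun h => (tP z h).1) zs) (map_inj_uniq (can_inj (prev_next us))).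
  rewrite enum_uniq !andbT.
  by apply: contraTneq exz => ->; rewrite eirr.
- by move=> v vt; rewrite (notin_nbhd_nonadj xH (tH v vt) (tP v vt).2).
- by move=> v vt; rewrite (notin_nbhd_nonadj zH (tH v vt) (tP v vt).2).
- move=> _ _ /mapP[u + ->] /mapP[u' + ->]; rewrite !mem_enum !in_setD1.
  move=> /andP[ub uN] /andP[u'b u'N] neq; apply: next_nbhd_nonadj => //.
  by apply: contra neq => /eqP->.
- rewrite size_map -cardE -ltnS (leq_trans kN) // (cardsD1 b N) -add1n leq_add2r.
  exact: leq_b1.
Qed.

End LongestPath.

Theorem mainTheorem9 (k : nat) (T : finType) (e : rel T) (a b : T) (p : seq T) :
  2 <= k ->
  simple_graph e ->
  kconnected k.+1 e ->
  free_of (K2_kK1 k) e ->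
  a != b ->
  longest_path e a b p ->
  forall x y : T, x \notin (a :: p) -> y \notin (a :: p) ->
    connect (induced_rel e [pred v | v \notin (a :: p)]) x y -> x = y.
Proof.
move=> _ [esym eirr] kconn Kfree ab hlong x y xs _ xy.
have [//|nxy] := eqVneq x y; have [z xz] := connect_neq_edge xy nxy.
have [w ws wN] := exists_path_notin_nbhd esym hlong xs ab.
have wH := mem_notin_component e xs ws.
case: Kfree; apply: (component_edge_induced_K2_kK1 esym hlong xs eirr xz).
exact: kconnected_card_nbhd esym kconn (component_self e _ x) wH wN.
Qed.
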